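(* Let $T$ be an optimal Steiner tree of the regular $n$-simplex (terminals $\mathbf{e_1},\dots,\mathbf{e_n}\in\mathbb{R}^n$), and let $\mathbf{s}$ be a Steiner point of $T$ adjacent to a terminal $\mathbf{e_i}$. Then the two rays starting at $\mathbf{s}$ and extending the other two edges of $T$ at $\mathbf{s}$ leave the convex hull of the regular simplex at points of the face $F_i=\{\mathbf{x}\in\mathbb{R}^n: x_i=0,\ \|\mathbf{x}\|_1=1\}$.
   Context: A Steiner tree of a finite terminal set $P$ is a tree with vertex set $P\cup S$, $S$ a finite set of additional points (Steiner points), with Euclidean edge lengths; its cost is the total edge length. An optimal Steiner tree minimizes the cost; by convention it contains no trivial Steiner points (degree-$2$ points subdividing a straight segment), and every Steiner point of an optimal Steiner tree has exactly three neighbours. ''The point where a ray leaves the convex hull'' means the last point of the ray lying in the convex hull. *)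

From HB Require Import structures.
From mathcomp Require Import all_boot all_order all_algebra.
From mathcomp Require Import reals.
Set Implicit Arguments. Unset Strict Implicit. Unset Printing Implicit Defensive.
Import Order.TTheory GRing.Theory Num.Theory.
Local Open Scope ring_scope.

Definition enorm (R : realType) (n : nat) (x : 'rV[R]_n) : R :=
  Num.sqrt (\sum_(j < n) x 0 j ^+ 2).
Definition l1norm (R : realType) (n : nat) (x : 'rV[R]_n) : R :=
  \sum_(j < n) `|x 0 j|.

Definition acyclic (m : nat) (adj : rel 'I_m) : Prop :=
  forall c : seq 'I_m, uniq c -> (3 <= size c)%N -> ~~ cycle adj c.
Definition is_tree (m : nat) (adj : rel 'I_m) : Prop :=
  (forall i j, connect adj i j) /\ acyclic adj.

Record steiner_tree (R : realType) (n : nat) (P : seq 'rV[R]_n) := SteinerTree {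
  st_m : nat;
  st_pos : 'I_st_m -> 'rV[R]_n;
  st_adj : rel 'I_st_m;
  st_pos_inj : injective st_pos;
  st_sym : symmetric st_adj;
  st_irr : irreflexive st_adj;
  st_tree : is_tree st_adj;
  st_terms : forall p, p \in P -> exists i, st_pos i = p
}.
Arguments st_m {R n P} s : rename.
Arguments st_pos {R n P} s _ : rename.
Arguments st_adj {R n P} s _ _ : rename.

(* total edge length (each edge counted once) *)
Definition cost (R : realType) (n : nat) (P : seq 'rV[R]_n) (T : steiner_tree P) : R :=
  (\sum_(i < st_m T) \sum_(j < st_m T | st_adj T i j)
      enorm (st_pos T i - st_pos T j)) / 2.

Definition steiner_vertex (R : realType) (n : nat) (P : seq 'rV[R]_n)
  (T : steiner_tree P) (s : 'I_(st_m T)) : Prop := st_pos T s \notin P.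

Definition trivial_steiner (R : realType) (n : nat) (P : seq 'rV[R]_n)
  (T : steiner_tree P) (s : 'I_(st_m T)) : Prop :=
  steiner_vertex s /\
  exists a b, [/\ a != b, st_adj T s a, st_adj T s b,
    (forall c, st_adj T s c -> c = a \/ c = b) &
    exists t : R, 0 < t < 1 /\
      st_pos T s = (1 - t) *: st_pos T a + t *: st_pos T b].

(* optimal Steiner tree: minimal cost among all Steiner trees of P,
   and (by convention) without trivial Steiner points *)
Definition optimal_steiner_tree (R : realType) (n : nat) (P : seq 'rV[R]_n)
  (T : steiner_tree P) : Prop :=
  (forall T' : steiner_tree P, cost T <= cost T') /\
  (forall s : 'I_(st_m T), ~ trivial_steiner s).

Definition simplex_vertices (R : realType) (n : nat) : seq 'rV[R]_n :=
  [seq delta_mx 0 i | i <- enum 'I_n].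

Definition conv_hull (R : realType) (n : nat) (P : seq 'rV[R]_n) (x : 'rV[R]_n) : Prop :=
  exists w : 'I_(size P) -> R,
    [/\ forall k, 0 <= w k, \sum_k w k = 1 & x = \sum_k w k *: nth 0 P k].

Definition ray_exit_point (R : realType) (n : nat) (C : 'rV[R]_n -> Prop)
  (s u x : 'rV[R]_n) : Prop :=
  exists t0 : R, [/\ 0 <= t0, x = s + t0 *: (u - s), C x &
    forall t : R, t0 < t -> ~ C (s + t *: (u - s))].

Definition in_face (R : realType) (n : nat) (i : 'I_n) (x : 'rV[R]_n) : Prop :=
  x 0 i = 0 /\ l1norm x = 1.

From HB Require Import structures.
From mathcomp Require Import all_boot all_order all_algebra.
From mathcomp Require Import reals.
From mathcomp Require Import ring lra.
Import Order.TTheory GRing.Theory Num.Theory.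
Set Implicit Arguments. Unset Strict Implicit. Unset Printing Implicit Defensive.
Local Open Scope ring_scope.

(* Moving a Steiner point p of an optimal tree to p - e a changes the cost by
   -e A + O(e^2), where A is the sum over the neighbours q of p of
   <a, p - q> / |p - q|.  Hence a linear functional that is maximal at a
   Steiner point among its neighbours is constant on them.  Two consequences:
   a maximum principle (every vertex lies in the simplex, since the terminals
   do), and an ascent argument: if a neighbour u <> t of s lies above s, a
   strictly ascending path from s through u reaches a terminal other than t,
   for otherwise the path and the edge t s would close a cycle.  For the
   functional s_k x_i - s_i x_k, which vanishes at s and is positive at no
   terminal but e_i = t, this gives s_k u_i <= s_i u_k for all k <> i; on the
   hyperplane sum x = 1 these inequalities say that x_i is the first
   coordinate to vanish along the ray from s through u. *)

Section SmallPositive.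
Variable R : realType.

Definition for_small_pos (Pr : R -> Prop) : Prop :=
  exists2 d : R, 0 < d & forall e, 0 < e < d -> Pr e.

Lemma for_small_pos_both (P1 P2 : R -> Prop) :
  for_small_pos P1 -> for_small_pos P2 -> exists2 e, 0 < e & P1 e /\ P2 e.
Proof.
move=> [d1 d1_gt0 P1d] [d2 d2_gt0 P2d].
have m_gt0 : 0 < Num.min d1 d2 by rewrite lt_min d1_gt0.
have m_le1 : Num.min d1 d2 <= d1 by rewrite ge_min lexx.
have m_le2 : Num.min d1 d2 <= d2 by rewrite ge_min lexx orbT.
exists (Num.min d1 d2 / 2); first by rewrite divr_gt0.
by split; [apply: P1d | apply: P2d]; apply/andP; split; lra.
Qed.

Lemma finite_pos_lower_bound (I : finType) (Q : pred I) (f : I -> R) :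
  (forall i, Q i -> 0 < f i) -> exists2 d, 0 < d & forall i, Q i -> d < f i.
Proof.
move=> f_gt0; set m := \big[Num.min/1]_(i | Q i) f i.
have m_gt0 : 0 < m by apply: lt_bigmin.
exists (m / 2) => [|i Qi]; first by rewrite divr_gt0.
by have := bigmin_le_cond 1 f Qi; rewrite -/m; lra.
Qed.

End SmallPositive.

Section Euclid.
Variables (R : realType) (n : nat).
Implicit Types (a v x y : 'rV[R]_n) (e : R).

Definition dot a x : R := \sum_j a 0 j * x 0 j.
Definition enorm2 v : R := \sum_j v 0 j ^+ 2.

Lemma dotBr a x y : dot a (x - y) = dot a x - dot a y.
Proof. by rewrite /dot -sumrB; apply: eq_bigr => j _; rewrite !mxE mulrBr. Qed.

Lemma dotDl a v x : dot (a + v) x = dot a x + dot v x.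
Proof. by rewrite /dot -big_split; apply: eq_bigr => j _; rewrite !mxE mulrDl. Qed.

Lemma dotNl a x : dot (- a) x = - dot a x.
Proof. by rewrite /dot -sumrN; apply: eq_bigr => j _; rewrite !mxE mulNr. Qed.

Lemma dotZl e a x : dot (e *: a) x = e * dot a x.
Proof. by rewrite /dot mulr_sumr; apply: eq_bigr => j _; rewrite !mxE mulrA. Qed.

Lemma dot_deltal i x : dot (delta_mx 0 i) x = x 0 i.
Proof.
rewrite /dot (bigD1 i) //= big1 ?addr0 => [|j /negbTE ji]; last first.
  by rewrite mxE ji andbF mul0r.
by rewrite mxE !eqxx mul1r.
Qed.

Lemma dot_deltar i a : dot a (delta_mx 0 i) = a 0 i.
Proof.
rewrite /dot (bigD1 i) //= big1 ?addr0 => [|j /negbTE ji]; last first.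
  by rewrite mxE ji andbF mulr0.
by rewrite mxE !eqxx mulr1.
Qed.

Lemma enorm2_ge0 v : 0 <= enorm2 v.
Proof. by apply: sumr_ge0 => j _; rewrite sqr_ge0. Qed.

Lemma enorm2_eq0 v : (enorm2 v == 0) = (v == 0).
Proof.
apply/eqP/eqP => [v0|->]; last by rewrite /enorm2 big1 // => j _; rewrite mxE expr0n.
apply/rowP => j; rewrite mxE; apply/eqP; rewrite -sqrf_eq0; apply/eqP.
by apply: (psumr_eq0P (fun j _ => sqr_ge0 (v 0 j)) v0).
Qed.

Lemma enorm2_gt0 v : v != 0 -> 0 < enorm2 v.
Proof. by move=> v0; rewrite lt_neqAle enorm2_ge0 andbT eq_sym enorm2_eq0. Qed.

Lemma enorm2N v : enorm2 (- v) = enorm2 v.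
Proof. by apply: eq_bigr => j _; rewrite !mxE sqrrN. Qed.

Lemma enorm2Z e v : enorm2 (e *: v) = e ^+ 2 * enorm2 v.
Proof. by rewrite /enorm2 mulr_sumr; apply: eq_bigr => j _; rewrite !mxE exprMn. Qed.

Lemma enorm2_shift v a e :
  enorm2 (v - e *: a) = enorm2 v - 2 * e * dot a v + e ^+ 2 * enorm2 a.
Proof.
rewrite /enorm2 /dot !mulr_sumr -sumrB -big_split /=.
by apply: eq_bigr => j _; rewrite !mxE; ring.
Qed.

Lemma sqr_enorm v : enorm v ^+ 2 = enorm2 v.
Proof. exact/sqr_sqrtr/enorm2_ge0. Qed.

Lemma enorm_gt0 v : v != 0 -> 0 < enorm v.
Proof. by move=> v0; rewrite sqrtr_gt0 enorm2_gt0. Qed.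

Lemma enormN v : enorm (- v) = enorm v.
Proof. by rewrite /enorm -/(enorm2 _) enorm2N. Qed.

Lemma sqrtr_le_tangent (X Y : R) : 0 <= X -> 0 < Y ->
  Num.sqrt X <= (X + Y ^+ 2) / (2 * Y).
Proof.
move=> X_ge0 Y_gt0; rewrite ler_pdivlMr; last by lra.
have := sqr_sqrtr X_ge0; have := sqr_ge0 (Num.sqrt X - Y); nra.
Qed.

Lemma enorm_shift_le v a e : 0 < enorm v ->
  enorm (v - e *: a) <=
    enorm v - e * (dot a v / enorm v) + e ^+ 2 * (enorm2 a / (2 * enorm v)).
Proof.
move=> v_gt0; have := sqrtr_le_tangent (enorm2_ge0 (v - e *: a)) v_gt0.
rewrite -/(enorm _) enorm2_shift -sqr_enorm => /le_trans; apply.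
by rewrite le_eqVlt; apply/orP; left; apply/eqP; field; rewrite gt_eqF.
Qed.

Lemma sum_enorm_shift_lt (I : finType) (Q : pred I) (y : I -> 'rV[R]_n) p a :
  (forall i, Q i -> y i != p) ->
  0 < \sum_(i | Q i) dot a (p - y i) / enorm (p - y i) ->
  for_small_pos (fun e =>
    \sum_(i | Q i) enorm (p - e *: a - y i) < \sum_(i | Q i) enorm (p - y i)).
Proof.
move=> yp; set A := \sum_(i | Q i) _ => A_gt0.
have Y_gt0 i : Q i -> 0 < enorm (p - y i).
  by move=> Qi; rewrite enorm_gt0 // subr_eq0 eq_sym yp.
set B := \sum_(i | Q i) enorm2 a / (2 * enorm (p - y i)).
have B_ge0 : 0 <= B.
  apply: sumr_ge0 => i Qi; apply: divr_ge0; first exact: enorm2_ge0.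
  by have := Y_gt0 i Qi; lra.
exists (A / (B + 1)) => [|e /andP [e_gt0 eAB]]; first by rewrite divr_gt0 //; lra.
have eB : e * B < A by move: eAB; rewrite ltr_pdivlMr; nra.
suff : \sum_(i | Q i) enorm (p - e *: a - y i) <=
       \sum_(i | Q i) enorm (p - y i) - e * A + e ^+ 2 * B by nra.
rewrite /A /B !mulr_sumr -sumrN -!big_split /=; apply: ler_sum => i Qi.
by rewrite [p - _ - _]addrAC; have := enorm_shift_le a e (Y_gt0 i Qi); lra.
Qed.

Lemma shift_avoids (I : finType) (Q : pred I) (y : I -> 'rV[R]_n) p a :
  (forall i, Q i -> y i != p) ->
  for_small_pos (fun e => forall i, Q i -> p - e *: a != y i).
Proof.
move=> yp; have [d d_gt0 d_lt] :
    exists2 d, 0 < d & forall i, Q i -> d < enorm2 (y i - p).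
  by apply: finite_pos_lower_bound => i Qi; rewrite enorm2_gt0 // subr_eq0 yp.
have a_ge0 := enorm2_ge0 a.
have m_gt0 : 0 < Num.min 1 (d / (enorm2 a + 1)).
  by rewrite lt_min ltr01 divr_gt0 //; lra.
exists (Num.min 1 (d / (enorm2 a + 1))) => // e /andP [e_gt0].
rewrite lt_min ltr_pdivlMr; last by lra.
move=> /andP [e_lt1 ea_lt] i Qi; apply/eqP => yi.
have := d_lt i Qi; rewrite -yi addrAC subrr add0r enorm2N enorm2Z.
nra.
Qed.

End Euclid.

Section EdgeCost.
Variables (R : realType) (n m : nat) (adj : rel 'I_m).
Hypotheses (adj_sym : symmetric adj) (adj_irr : irreflexive adj).

Definition edge_cost (pos : 'I_m -> 'rV[R]_n) : R :=
  (\sum_i \sum_(j | adj i j) enorm (pos i - pos j)) / 2.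

Definition move_vertex (pos : 'I_m -> 'rV[R]_n) (p : 'I_m) (v : 'rV[R]_n) :
  'I_m -> 'rV[R]_n := fun x => if x == p then v else pos x.

Lemma edge_cost_move pos p v :
  edge_cost (move_vertex pos p v) - edge_cost pos =
  \sum_(q | adj p q) (enorm (v - pos q) - enorm (pos p - pos q)).
Proof.
set D := fun q => enorm (v - pos q) - enorm (pos p - pos q).
have edgeD i j : adj i j ->
    enorm (move_vertex pos p v i - move_vertex pos p v j)
      - enorm (pos i - pos j) =
    (if i == p then D j else 0) + (if j == p then D i else 0).
  rewrite /move_vertex.
  case: (eqVneq i p) => [->|ip]; case: (eqVneq j p) => [->|jp].
  - by rewrite adj_irr.
  - by rewrite addr0.
  - by rewrite add0r /D -enormN opprB -(enormN (pos p - _)) opprB.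
  - by rewrite subrr addr0.
rewrite /edge_cost -mulrBl -sumrB.
under eq_bigr => i _ do rewrite -sumrB.
under eq_bigr => i _ do
  (under eq_bigr => j ij do rewrite (edgeD i j ij); rewrite big_split /=).
rewrite big_split /=.
have first_end : \sum_i \sum_(j | adj i j) (if i == p then D j else 0) =
                 \sum_(q | adj p q) D q.
  rewrite (bigD1 p) //= eqxx [X in _ + X]big1 ?addr0 // => i /negbTE ip.
  by apply: big1 => j _; rewrite ip.
have second_end : \sum_i \sum_(j | adj i j) (if j == p then D i else 0) =
                  \sum_(q | adj p q) D q.
  rewrite [RHS]big_mkcond; apply: eq_bigr => i _.
  rewrite big_mkcond (bigD1 p) //= eqxx big1 ?addr0 => [|j /negbTE jp].
    by rewrite adj_sym; case: (adj p i).
  by rewrite jp; case: (adj i j).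
by rewrite first_end second_end; lra.
Qed.

End EdgeCost.

Section OptimalSteinerTree.
Variables (R : realType) (n : nat) (P : seq 'rV[R]_n) (T : steiner_tree P).
Hypothesis T_opt : optimal_steiner_tree T.
Local Notation pos := (st_pos T).
Local Notation adj := (st_adj T).

Lemma optimal_steiner_local_min p v :
  steiner_vertex p -> (forall w, w != p -> v != pos w) ->
  \sum_(q | adj p q) enorm (pos p - pos q) <= \sum_(q | adj p q) enorm (v - pos q).
Proof.
move=> p_steiner v_new.
have moved_inj : injective (move_vertex pos p v).
  move=> x y; rewrite /move_vertex.
  case: (eqVneq x p) => [->|xp]; case: (eqVneq y p) => [->|yp] //.
  - by move=> vy; move: (v_new y yp); rewrite vy eqxx.
  - by move=> xv; move: (v_new x xp); rewrite xv eqxx.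
  - exact: st_pos_inj.
have moved_terms x : x \in P -> exists j, move_vertex pos p v j = x.
  move=> xP; have [j jx] := st_terms T xP; exists j; rewrite /move_vertex.
  case: eqP => // jp; move: p_steiner; rewrite /steiner_vertex -jp jx.
  by rewrite xP.
pose T' := SteinerTree moved_inj (@st_sym _ _ _ T) (@st_irr _ _ _ T) (st_tree T)
  moved_terms.
have cost_diff : cost T' - cost T =
    \sum_(q | adj p q) (enorm (v - pos q) - enorm (pos p - pos q)).
  exact: (edge_cost_move (@st_sym _ _ _ T) (@st_irr _ _ _ T)).
by have := T_opt.1 T'; rewrite -subr_ge0 cost_diff sumrB subr_ge0.
Qed.

Lemma optimal_steiner_flat_max p a :
  steiner_vertex p -> (forall q, adj p q -> dot a (pos q) <= dot a (pos p)) ->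
  forall q, adj p q -> dot a (pos q) = dot a (pos p).
Proof.
move=> p_steiner below q0 pq0; apply/eqP; rewrite eq_le below //=.
rewrite leNgt; apply/negP => q0_lt.
have nb_ne q : adj p q -> pos q != pos p.
  by move=> pq; apply: contraTneq pq => /st_pos_inj ->; rewrite st_irr.
have others_ne w : w != p -> pos w != pos p by apply: contra => /eqP/st_pos_inj ->.
have A_gt0 : 0 < \sum_(q | adj p q) dot a (pos p - pos q) / enorm (pos p - pos q).
  have dist_gt0 q : adj p q -> 0 < enorm (pos p - pos q).
    by move=> pq; rewrite enorm_gt0 // subr_eq0 eq_sym nb_ne.
  rewrite (bigD1 q0) //= ltr_wpDr //.
    apply: sumr_ge0 => q /andP [pq _].
    by rewrite divr_ge0 ?dotBr ?subr_ge0 ?below ?ltW ?dist_gt0.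
  by rewrite divr_gt0 ?dotBr ?subr_gt0 ?dist_gt0.
have [e _ [cost_lt moved_new]] :=
  for_small_pos_both (sum_enorm_shift_lt nb_ne A_gt0) (shift_avoids a others_ne).
have := optimal_steiner_local_min p_steiner moved_new.
by rewrite leNgt cost_lt.
Qed.

Lemma optimal_steiner_max_principle a c t0 : pos t0 \in P ->
  (forall x, pos x \in P -> dot a (pos x) <= c) -> forall p, dot a (pos p) <= c.
Proof.
move=> t0P term_le p.
have [p0 _ p0_max] := @arg_maxP _ _ _ t0 xpredT (fun j => dot a (pos j)) isT.
apply: le_trans (p0_max p isT) _; rewrite leNgt; apply/negP => c_lt.
set M := dot a (pos p0) in p0_max c_lt.
have level_path cs x : dot a (pos x) = M -> path adj x cs ->
    dot a (pos (last x cs)) = M.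
  elim: cs x => [|y cs IH] x xM //= /andP [xy ycs]; apply: IH ycs.
  have x_steiner : steiner_vertex x by apply/negP => /term_le; lra.
  by rewrite -xM; apply: optimal_steiner_flat_max => // q _; rewrite xM; apply: p0_max.
case/connectP: ((st_tree T).1 p0 t0) => cs p0cs t0E.
by have := term_le t0 t0P; rewrite t0E level_path //; lra.
Qed.

Lemma optimal_steiner_ascent a x y :
  adj x y -> dot a (pos x) < dot a (pos y) ->
  exists cs, [/\ path adj y cs,
    path (fun v w => dot a (pos v) < dot a (pos w)) y cs & pos (last y cs) \in P].
Proof.
pose above z := [set w | dot a (pos z) < dot a (pos w)].
have [N] := ubnP #|above y|; elim: N x y => // N IH x y yN xy xy_lt.
have [yP|y_steiner] := boolP (pos y \in P); first by exists [::].
have [z yz yz_lt] : exists2 z, adj y z & dot a (pos y) < dot a (pos z).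
  have [/existsP [z /andP [yz yz_lt]]|/existsPn none_above] :=
    boolP [exists z, adj y z && (dot a (pos y) < dot a (pos z))].
    by exists z.
  have below q : adj y q -> dot a (pos q) <= dot a (pos y).
    by move=> yq; move: (none_above q); rewrite yq leNgt.
  have yx : adj y x by rewrite st_sym.
  by move: xy_lt; rewrite (optimal_steiner_flat_max y_steiner below yx) ltxx.
have [|cs [zcs zcs_lt lastP]] := IH y z _ yz yz_lt.
  rewrite ltnS in yN; apply: leq_trans yN; apply/proper_card/properP; split.
    by apply/subsetP => w; rewrite !inE; apply: lt_trans.
  by exists z; rewrite !inE ?ltxx.
by exists (z :: cs); rewrite /= yz yz_lt.
Qed.

Lemma optimal_steiner_other_terminal_above a s u t :
  adj s u -> adj s t -> u != t -> dot a (pos s) < dot a (pos u) ->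
  exists x, [/\ pos x \in P, x != t & dot a (pos s) < dot a (pos x)].
Proof.
move=> su st ut su_lt.
have [cs [ucs ucs_lt lastP]] := optimal_steiner_ascent su su_lt.
pose lt := fun v w => dot a (pos v) < dot a (pos w).
have lt_trans : transitive lt by move=> ? ? ?; apply: lt_trans.
have lt_irr : irreflexive lt by move=> ?; apply: ltxx.
have s_sorted : sorted lt [:: s, u & cs] by rewrite /= [lt s u]su_lt.
exists (last u cs); split => //; last first.
  by apply: (allP (order_path_min lt_trans s_sorted)); apply: mem_last.
apply/eqP => last_t.
have size3 : (3 <= size [:: s, u & cs])%N.
  by case: cs {ucs ucs_lt lastP s_sorted} last_t => //= ut0; rewrite ut0 eqxx in ut.
have := (st_tree T).2 _ (sorted_uniq lt_trans lt_irr s_sorted) size3.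
by rewrite /cycle rcons_path /= su ucs last_t st_sym st.
Qed.

End OptimalSteinerTree.

Section Simplex.
Variables (R : realType) (n : nat).
Implicit Types (s u x : 'rV[R]_n).

Lemma simplex_verticesP x :
  reflect (exists j, x = delta_mx 0 j) (x \in simplex_vertices R n).
Proof.
apply: (iffP mapP) => [[j _ ->]|[j ->]]; first by exists j.
by exists j; rewrite ?mem_enum.
Qed.

Lemma conv_hull_simplex_ge0 x c :
  conv_hull (simplex_vertices R n) x -> 0 <= x 0 c.
Proof.
case=> w [w_ge0 _ ->]; rewrite summxE; apply: sumr_ge0 => k _.
rewrite mxE mulr_ge0 ?w_ge0 //.
by have /simplex_verticesP [j ->] := mem_nth 0 (ltn_ord k); rewrite mxE ler0n.
Qed.

Lemma conv_hull_simplex_intro x :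
  (forall c, 0 <= x 0 c) -> \sum_c x 0 c = 1 -> conv_hull (simplex_vertices R n) x.
Proof.
have size_vertices : size (simplex_vertices R n) = n by rewrite size_map size_enum_ord.
rewrite /conv_hull size_vertices => x_ge0 x_sum; exists (fun k => x 0 k); split => //.
rewrite {1}(row_sum_delta x); apply: eq_bigr => k _; congr (_ *: _).
by rewrite /simplex_vertices (nth_map k) ?size_enum_ord // nth_ord_enum.
Qed.

Lemma ray_exit_simplex_face s u (i : 'I_n) :
  \sum_c s 0 c = 1 -> \sum_c u 0 c = 1 -> u != s -> 0 < s 0 i ->
  (forall k, k != i -> s 0 k * u 0 i <= s 0 i * u 0 k) ->
  exists x, ray_exit_point (conv_hull (simplex_vertices R n)) s u x /\ in_face i x.
Proof.
move=> s_sum u_sum us si_gt0 cross.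
pose d k := u 0 k - s 0 k.
have d_sum : \sum_k d k = 0 by rewrite sumrB s_sum u_sum subrr.
have g_ge0 k : 0 <= s 0 i * d k - s 0 k * d i.
  have [->|ki] := eqVneq k i; first by rewrite mulrC subrr.
  by have := cross k ki; rewrite /d; lra.
have g_sum : \sum_k (s 0 i * d k - s 0 k * d i) = - d i.
  by rewrite sumrB -mulr_sumr -mulr_suml d_sum s_sum; ring.
have di_lt0 : d i < 0.
  rewrite lt_neqAle -oppr_ge0 -g_sum sumr_ge0 // andbT.
  apply: contra us => /eqP di0; apply/eqP/rowP => k; apply/eqP; rewrite -subr_eq0.
  have d_ge0 j : 0 <= d j by have := g_ge0 j; rewrite di0 mulr0 subr0 pmulr_rge0.
  by apply/eqP; apply: (psumr_eq0P (fun j _ => d_ge0 j) d_sum).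
pose tau := s 0 i / - d i.
have tau_di : tau * d i = - s 0 i by rewrite /tau; field; rewrite lt_eqF.
pose x := s + tau *: (u - s).
have xE k : x 0 k = (s 0 i * d k - s 0 k * d i) / - d i.
  by rewrite !mxE -/(d k) /tau; field; rewrite lt_eqF.
have x_ge0 k : 0 <= x 0 k by rewrite xE divr_ge0 // oppr_ge0 ltW.
have x_sum : \sum_k x 0 k = 1.
  under eq_bigr do rewrite !mxE -/(d _).
  by rewrite big_split /= s_sum -mulr_sumr d_sum mulr0 addr0.
exists x; split.
  exists tau; split => //; first by rewrite divr_ge0 ?oppr_ge0 ?ltW.
    exact: conv_hull_simplex_intro.
  move=> t' tau_lt /(conv_hull_simplex_ge0 i); rewrite !mxE -/(d i).
  by rewrite leNgt; apply/negP; nra.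
split; first by rewrite xE [s 0 i * _]mulrC subrr mul0r.
by rewrite /l1norm -x_sum; apply: eq_bigr => k _; rewrite ger0_norm.
Qed.

End Simplex.

Section SimplexSteinerTree.
Variables (R : realType) (n : nat) (T : steiner_tree (simplex_vertices R n)).
Hypothesis T_opt : optimal_steiner_tree T.
Variables (t : 'I_(st_m T)) (i : 'I_n).
Hypothesis t_vertex : st_pos T t = delta_mx 0 i.
Local Notation pos := (st_pos T).
Local Notation adj := (st_adj T).

Let t_terminal : pos t \in simplex_vertices R n.
Proof. by rewrite t_vertex; apply/simplex_verticesP; exists i. Qed.

Lemma simplex_tree_coord_sum p : \sum_c pos p 0 c = 1.
Proof.
pose one : 'rV[R]_n := const_mx 1.
have dot_one x : dot one x = \sum_c x 0 c by apply: eq_bigr => c _; rewrite mxE mul1r.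
have one_terms x : x \in simplex_vertices R n -> dot one x = 1.
  by move/simplex_verticesP => [j ->]; rewrite dot_deltar mxE.
apply/eqP; rewrite eq_le -!dot_one; apply/andP; split.
  by apply: (optimal_steiner_max_principle T_opt t_terminal) => x /one_terms ->.
rewrite -lerN2 -dotNl.
apply: (optimal_steiner_max_principle T_opt t_terminal) => x /one_terms.
by rewrite dotNl => ->.
Qed.

Lemma simplex_tree_coord_ge0 p c : 0 <= pos p 0 c.
Proof.
rewrite -oppr_le0 -(dot_deltal c) -dotNl.
apply: (optimal_steiner_max_principle T_opt t_terminal) => x /simplex_verticesP [j ->].
by rewrite dotNl dot_deltal oppr_le0 mxE ler0n.
Qed.

Lemma simplex_tree_steiner_coord_gt0 s :
  steiner_vertex s -> adj s t -> 0 < pos s 0 i.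
Proof.
move=> s_steiner st; rewrite lt_neqAle simplex_tree_coord_ge0 andbT eq_sym.
apply/eqP => si0.
have below q : adj s q ->
    dot (- delta_mx 0 i) (pos q) <= dot (- delta_mx 0 i) (pos s).
  by move=> _; rewrite !dotNl !dot_deltal si0 oppr0 oppr_le0 simplex_tree_coord_ge0.
have := optimal_steiner_flat_max T_opt s_steiner below st.
rewrite !dotNl !dot_deltal t_vertex si0 mxE !eqxx oppr0 => /eqP.
by rewrite oppr_eq0 oner_eq0.
Qed.

Lemma simplex_tree_cross_le s u k :
  steiner_vertex s -> adj s t -> adj s u -> u != t -> k != i ->
  pos s 0 k * pos u 0 i <= pos s 0 i * pos u 0 k.
Proof.
move=> s_steiner st su ut ki; rewrite leNgt; apply/negP => cross_lt.
have si_gt0 := simplex_tree_steiner_coord_gt0 s_steiner st.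
pose a : 'rV[R]_n := pos s 0 k *: delta_mx 0 i - pos s 0 i *: delta_mx 0 k.
have dot_a x : dot a x = pos s 0 k * x 0 i - pos s 0 i * x 0 k.
  by rewrite dotDl dotNl !dotZl !dot_deltal.
have [x [/simplex_verticesP [j xj] xt]] :
    exists x, [/\ pos x \in simplex_vertices R n, x != t &
                dot a (pos s) < dot a (pos x)].
  by apply: (optimal_steiner_other_terminal_above T_opt su st ut); rewrite !dot_a; lra.
have [ji|ji] := eqVneq j i.
  by move: xt; rewrite (st_pos_inj (_ : pos x = pos t)) ?eqxx // xj t_vertex ji.
rewrite !dot_a xj !mxE eqxx /= eq_sym (negbTE ji) mulr0 sub0r.
by have := ler0n R (k == j); nra.
Qed.

End SimplexSteinerTree.

Unset Implicit Arguments.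

Theorem mainTheorem8 (R : realType) (n : nat)
  (T : steiner_tree (simplex_vertices R n)) :
  optimal_steiner_tree T ->
  forall (s t u : 'I_(st_m T)) (i : 'I_n),
    steiner_vertex s ->
    st_pos T t = delta_mx 0 i ->
    st_adj T s t ->
    st_adj T s u -> u != t ->
    exists x : 'rV[R]_n,
      ray_exit_point (conv_hull (simplex_vertices R n)) (st_pos T s) (st_pos T u) x
      /\ in_face i x.
Proof.
move=> T_opt s t u i s_steiner t_vertex st su ut.
apply: ray_exit_simplex_face.
- exact: (simplex_tree_coord_sum T_opt t_vertex).
- exact: (simplex_tree_coord_sum T_opt t_vertex).
- by apply/eqP => /st_pos_inj us; move: su; rewrite us st_irr.
- exact: (simplex_tree_steiner_coord_gt0 T_opt t_vertex s_steiner st).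
- by move=> k; apply: (simplex_tree_cross_le T_opt t_vertex s_steiner st su ut).
Qed.
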